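(* Every purely resolving class of left $R$-modules is a special F-class.
   Context: $R$ is a ring with $1$; modules are left $R$-modules. pp formulas and $\phi(M)$ as usual; $\phi\le\psi$ means $\phi(N)\subseteq\psi(N)$ for all modules $N$, and for a class $\mathcal F$, $\phi\le_{\mathcal F}\psi$ means $\phi(F)\subseteq\psi(F)$ for all $F\in\mathcal F$. An F-sentence is an implication $\phi\to\bigvee_{i\in I}\phi_i$ where $\phi$ and all $\phi_i$ are pp formulas in the same finitely many free variables, $I$ may be infinite, and the family $(\phi_i)$ is closed under finite sums (a module satisfies it iff every tuple in $\phi(M)$ lies in some $\phi_i(M)$). An F-class is a class of modules axiomatized by a set of F-sentences. An F-sentence is in standard form if $\phi_i\le\phi$ for all $i$. An F-class $\mathcal F$ is special if it has an axiomatization by F-sentences in standard form containing exactly one axiom with premise $\phi$ for each pp formula $\phi$, such that for any two axioms $\phi\to\bigvee_i\phi_i$ and $\psi\to\bigvee_j\psi_j$ of it, $\phi\le_{\mathcal F}\psi$ holds only if for every $i$ there is $j$ with $\phi_i\le\psi_j$. A module is purely generated by a class $\mathcal B$ if it is a pure-epimorphic image of a direct sum of modules from $\mathcal B$; $\mathrm{PGen}\,\mathcal B$ is the class of all such modules; a class is purely resolving if it equals $\mathrm{PGen}\,\mathcal B$ for some class $\mathcal B$ of pure-projective modules closed under finite direct sums. *)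

From HB Require Import structures.
From mathcomp Require Import all_boot all_order all_algebra.
Set Implicit Arguments. Unset Strict Implicit. Unset Printing Implicit Defensive.
Import GRing.Theory.
Local Open Scope ring_scope.

Section PP.
Variable R : pzRingType.

Definition modclass := lmodType R -> Prop.

(* A pp formula in n free variables: exists y (of length m), A x + B y = 0,
   a system of k linear equations. *)
Record ppf (n : nat) := PPF {
  pp_k : nat; pp_m : nat;
  pp_A : 'M[R]_(pp_k, n); pp_B : 'M[R]_(pp_k, pp_m) }.

Definition ppsat n (phi : ppf n) (M : lmodType R) (x : 'I_n -> M) : Prop :=
  exists y : 'I_(pp_m phi) -> M, forall r : 'I_(pp_k phi),
    \sum_(j < n) pp_A phi r j *: x j + \sum_(l < pp_m phi) pp_B phi r l *: y l = 0.

Definition pp_le n (phi psi : ppf n) : Prop :=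
  forall (M : lmodType R) (x : 'I_n -> M), ppsat phi x -> ppsat psi x.

Definition pp_leF (F : modclass) n (phi psi : ppf n) : Prop :=
  forall (M : lmodType R), F M -> forall x : 'I_n -> M, ppsat phi x -> ppsat psi x.

Definition pp_is_sum n (chi phi psi : ppf n) : Prop :=
  forall (M : lmodType R) (x : 'I_n -> M),
    ppsat chi x <-> exists x1 x2 : 'I_n -> M,
      (forall j, x j = x1 j + x2 j) /\ ppsat phi x1 /\ ppsat psi x2.

(* The conclusion of an F-sentence: a family of pp formulas (phi_i)_{i in I},
   closed under (finite) sums. *)
Record Fconcl (n : nat) := FConcl {
  fc_I : Type;
  fc_fam : fc_I -> ppf n;
  fc_closed : forall i j : fc_I, exists k : fc_I,
      pp_is_sum (fc_fam k) (fc_fam i) (fc_fam j) }.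
Arguments fc_fam {n} f _.

Definition Fsat n (phi : ppf n) (C : Fconcl n) (M : lmodType R) : Prop :=
  forall x : 'I_n -> M, ppsat phi x -> exists i : fc_I C, ppsat (fc_fam C i) x.

(* F is a special F-class: axiomatized by F-sentences in standard form,
   exactly one for each pp formula phi (namely phi -> \/ ax phi), such that
   phi <=_F psi implies every phi_i lies below some psi_j. *)
Definition special_Fclass (F : modclass) : Prop :=
  exists ax : forall n (phi : ppf n), Fconcl n,
    (forall n (phi : ppf n) (i : fc_I (ax n phi)), pp_le (fc_fam (ax n phi) i) phi)
    /\ (forall M : lmodType R, F M <-> forall n (phi : ppf n), Fsat phi (ax n phi) M)
    /\ (forall n (phi psi : ppf n), pp_leF F phi psi ->
          forall i : fc_I (ax n phi), exists j : fc_I (ax n psi),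
            pp_le (fc_fam (ax n phi) i) (fc_fam (ax n psi) j)).

Definition is_dsum (I : Type) (B : I -> lmodType R) (S : lmodType R)
    (iota : forall i, {linear B i -> S}) : Prop :=
  forall (N : lmodType R) (f : forall i, {linear B i -> N}),
    (exists g : {linear S -> N}, forall i, (g \o iota i) =1 f i)
    /\ (forall g1 g2 : {linear S -> N},
          (forall i, (g1 \o iota i) =1 f i) -> (forall i, (g2 \o iota i) =1 f i) ->
          g1 =1 g2).

(* pure epimorphism: surjective, with pure kernel (every finite system of
   linear equations with parameters in Ker p solvable in S is solvable in Ker p) *)
Definition pure_epi (S M : lmodType R) (p : {linear S -> M}) : Prop :=
  (forall m : M, exists s : S, p s = m)
  /\ (forall n (phi : ppf n) (x : 'I_n -> S), (forall j, p (x j) = 0) ->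
        ppsat phi x ->
        exists y : 'I_(pp_m phi) -> S, (forall l, p (y l) = 0) /\
          forall r : 'I_(pp_k phi),
            \sum_(j < n) pp_A phi r j *: x j + \sum_(l < pp_m phi) pp_B phi r l *: y l = 0).

Definition pure_projective (P : lmodType R) : Prop :=
  forall (S M : lmodType R) (p : {linear S -> M}), pure_epi p ->
    forall f : {linear P -> M}, exists g : {linear P -> S}, (p \o g) =1 f.

Definition PGen (B : modclass) : modclass := fun M =>
  exists (I : Type) (Bi : I -> lmodType R) (S : lmodType R)
         (iota : forall i, {linear Bi i -> S}),
    (forall i, B (Bi i)) /\ is_dsum iota /\
    exists p : {linear S -> M}, pure_epi p.

(* closed under finite direct sums (binary ones suffice, by induction) *)
Definition closed_fin_dsum (B : modclass) : Prop :=
  forall (Bi : bool -> lmodType R) (S : lmodType R)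
         (iota : forall i, {linear Bi i -> S}),
    (forall i, B (Bi i)) -> is_dsum iota -> B S.

Definition purely_resolving (F : modclass) : Prop :=
  exists B : modclass,
    (forall P, B P -> pure_projective P) /\ closed_fin_dsum B /\
    (forall M, F M <-> PGen B M).

End PP.

From HB Require Import structures.
From mathcomp Require Import all_boot all_order all_algebra.
From mathcomp Require Import boolp.
Import GRing.Theory.
Local Open Scope ring_scope.

Set Implicit Arguments. Unset Strict Implicit. Unset Printing Implicit Defensive.

(* Every purely resolving class F = PGen B (B a class of pure-projective
   modules) is a special F-class.

   For a pp formula phi the axiom is  phi -> \/ psi, over all psi <= phi that
   are realizable: psi has a free realization (a tuple satisfying psi and
   mapping linearly onto every tuple satisfying psi) in a direct sum of
   modules of B.  These conclusions are closed under sums of formulas.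
   - Soundness: a tuple of phi(M), M in PGen B, lifts along the pure
     epimorphism to a pp tuple of a direct sum S of modules of B; S is
     pure-projective, and every tuple of a pure-projective module has a free
     realization, necessarily implying phi.
   - Completeness: a model of the axioms is a pure-epimorphic image of the
     direct sum of realizations chosen for all its pp tuples.
   - Specialness: if phi <=_F psi, the realization of a conclusion psi' of
     phi lives in F, hence satisfies psi, so psi' <= psi. *)

(* An element of the direct
   sum of (X j)_{j in J} is a dependent function with finite support; the
   support is only asserted propositionally, so we work with J as a type with
   classical equality ({classic J}). *)
Section DirectSum.
Variables (R : pzRingType) (J : Type) (X : J -> lmodType R).
Local Notation cJ := {classic J}.

Definition finsupp (f : forall j, X j) : Prop :=
  exists s : seq cJ, forall j : cJ, j \notin s -> f j = 0.

Record dsum := DSum { dfun : forall j, X j; dfunP : `[< finsupp dfun >] }.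
HB.instance Definition _ := [isSub for dfun].
HB.instance Definition _ := [Choice of dsum by <:].

Lemma dsumE (f g : dsum) : (forall j, dfun f j = dfun g j) -> f = g.
Proof. by move=> h; apply: val_inj; apply: functional_extensionality_dep. Qed.

Lemma finsupp0 : `[< finsupp (fun j => 0) >].
Proof. by apply/asboolP; exists [::]. Qed.

Lemma finsuppD (f g : dsum) : `[< finsupp (fun j => dfun f j + dfun g j) >].
Proof.
apply/asboolP; have [s hs] := asboolW (dfunP f); have [t ht] := asboolW (dfunP g).
exists (s ++ t) => j; rewrite mem_cat negb_or => /andP[js jt].
by rewrite hs // ht // addr0.
Qed.

Lemma finsuppN (f : dsum) : `[< finsupp (fun j => - dfun f j) >].
Proof.
apply/asboolP; have [s hs] := asboolW (dfunP f).
by exists s => j js; rewrite hs // oppr0.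
Qed.

Lemma finsuppZ a (f : dsum) : `[< finsupp (fun j => a *: dfun f j) >].
Proof.
apply/asboolP; have [s hs] := asboolW (dfunP f).
by exists s => j js; rewrite hs // scaler0.
Qed.

Definition dsadd f g := DSum (finsuppD f g).
Definition dsopp f := DSum (finsuppN f).
Definition dsscale a f := DSum (finsuppZ a f).

Lemma dsaddA : associative dsadd.
Proof. by move=> f g h; apply: dsumE => j /=; rewrite addrA. Qed.
Lemma dsaddC : commutative dsadd.
Proof. by move=> f g; apply: dsumE => j /=; rewrite addrC. Qed.
Lemma dsadd0 : left_id (DSum finsupp0) dsadd.
Proof. by move=> f; apply: dsumE => j /=; rewrite add0r. Qed.
Lemma dsaddN : left_inverse (DSum finsupp0) dsopp dsadd.
Proof. by move=> f; apply: dsumE => j /=; rewrite addNr. Qed.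
HB.instance Definition _ := GRing.isZmodule.Build dsum dsaddA dsaddC dsadd0 dsaddN.

Lemma dsscaleA a b (v : dsum) : dsscale a (dsscale b v) = dsscale (a * b) v.
Proof. by apply: dsumE => j /=; rewrite scalerA. Qed.
Lemma dsscale1 : left_id 1 dsscale.
Proof. by move=> v; apply: dsumE => j /=; rewrite scale1r. Qed.
Lemma dsscaleDr : right_distributive dsscale +%R.
Proof. by move=> a u v; apply: dsumE => j /=; rewrite scalerDr. Qed.
Lemma dsscaleDl (v : dsum) : {morph dsscale^~ v: a b / a + b}.
Proof. by move=> a b; apply: dsumE => j /=; rewrite scalerDl. Qed.
HB.instance Definition _ := GRing.Zmodule_isLmodule.Build R dsum
  dsscaleA dsscale1 dsscaleDr dsscaleDl.

Definition dcoord (j : J) (f : dsum) : X j := dfun f j.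
Lemma dcoord_lin (j : J) : linear (dcoord j).
Proof. by []. Qed.
HB.instance Definition _ (j : J) :=
  GRing.isLinear.Build R dsum (X j) *:%R (dcoord j) (dcoord_lin j).

Lemma dcoordP (j : J) a (u v : dsum) :
  dcoord j (a *: u + v) = a *: dcoord j u + dcoord j v.
Proof. by []. Qed.

Lemma dcoord_sum (j : J) (s : seq cJ) (F : cJ -> dsum) :
  dcoord j (\sum_(k <- s) F k) = \sum_(k <- s) dcoord j (F k).
Proof. by rewrite linear_sum. Qed.

Definition dsupp (f : dsum) : seq cJ :=
  [seq j <- undup (projT1 (cid (asboolW (dfunP f)))) | dcoord j f != 0].

Lemma dsupp_uniq f : uniq (dsupp f).
Proof. exact/filter_uniq/undup_uniq. Qed.

Lemma mem_dsupp f (j : cJ) : (j \in dsupp f) = (dcoord j f != 0).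
Proof.
rewrite mem_filter mem_undup; case: (cid _) => s /= hs.
case: (boolP (dcoord j f != 0)) => //= nz; apply/negPn/negP => js.
by move: nz; rewrite /dcoord hs // eqxx.
Qed.

Definition inj_fun (j : J) (x : X j) : forall k, X k :=
  fun k => match pselect (j = k) with left e => eq_rect j X x k e | right _ => 0 end.

Lemma inj_funP (j : J) (x : X j) : `[< finsupp (inj_fun x) >].
Proof.
apply/asboolP; exists [:: (j : cJ)] => k; rewrite inE => /eqP nk.
by rewrite /inj_fun; case: pselect => // e; case: nk.
Qed.
Definition dinj j (x : X j) : dsum := DSum (inj_funP x).

Lemma dcoord_dinj (j : J) (x : X j) : dcoord j (dinj x) = x.
Proof.
rewrite /dcoord /= /inj_fun; case: pselect => // e.
by rewrite (Prop_irrelevance e erefl).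
Qed.

Lemma dcoord_dinj_neq (j k : J) (x : X j) : j <> k -> dcoord k (dinj x) = 0.
Proof. by move=> nk; rewrite /dcoord /= /inj_fun; case: pselect. Qed.

Lemma dinj_lin (j : J) : linear (@dinj j).
Proof.
move=> a x y; apply: dsumE => k.
change (dcoord k (dinj (a *: x + y)) = dcoord k (a *: dinj x + dinj y)).
rewrite dcoordP.
have [<-|nk] := pselect (j = k); first by rewrite !dcoord_dinj.
by rewrite !dcoord_dinj_neq // scaler0 addr0.
Qed.
HB.instance Definition _ (j : J) :=
  GRing.isLinear.Build R (X j) dsum *:%R (@dinj j) (@dinj_lin j).

Lemma dsum_decomp (f : dsum) (s : seq cJ) : uniq s ->
  (forall j : cJ, dcoord j f != 0 -> j \in s) ->
  f = \sum_(j <- s) dinj (dcoord j f).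
Proof.
move=> us hs; apply: dsumE => k.
change (dcoord k f = dcoord k (\sum_(j <- s) dinj (dcoord j f))); rewrite dcoord_sum.
case: (boolP ((k : cJ) \in s)) => ks.
  rewrite (bigD1_seq (k : cJ)) // dcoord_dinj big1 => [|j /eqP nj].
    by rewrite Monoid.mulm1.
  by rewrite dcoord_dinj_neq // => e; apply: nj.
rewrite big1_seq; last first.
  by move=> j js; rewrite dcoord_dinj_neq // => e; move: js; rewrite e (negbTE ks).
by apply/eqP; apply: contraNT ks => /hs.
Qed.

Section Map.
Variables (N : lmodType R) (F : forall j, {linear X j -> N}).
Definition dmap (f : dsum) : N := \sum_(j <- dsupp f) F j (dcoord j f).

Lemma dmap_seq (f : dsum) (s : seq cJ) : uniq s ->
  (forall j : cJ, dcoord j f != 0 -> j \in s) ->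
  dmap f = \sum_(j <- s) F j (dcoord j f).
Proof.
move=> us hs; rewrite /dmap [RHS](bigID (fun j : cJ => dcoord j f != 0)) /=.
rewrite [X in _ = _ + X]big1 ?addr0; last by move=> j /negPn/eqP ->; rewrite linear0.
rewrite -[RHS]big_filter; apply/perm_big/uniq_perm; [exact: dsupp_uniq|exact: filter_uniq|].
move=> j; rewrite mem_dsupp mem_filter.
by case: (boolP (dcoord j f != 0)) => //= /hs ->.
Qed.

Lemma dmap_lin : linear dmap.
Proof.
move=> a f g; set s := undup (dsupp f ++ dsupp g).
have us : uniq s by exact: undup_uniq.
have hf (j : cJ) : dcoord j f != 0 -> j \in s.
  by rewrite -mem_dsupp mem_undup mem_cat => ->.
have hg (j : cJ) : dcoord j g != 0 -> j \in s.
  by rewrite -mem_dsupp mem_undup mem_cat orbC => ->.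
rewrite (dmap_seq us hf) (dmap_seq us hg) (dmap_seq (f := a *: f + g) us).
  by rewrite scaler_sumr -big_split /=; apply: eq_bigr => j _; rewrite !linearP.
move=> j; rewrite dcoordP; apply: contraR => h.
have /negPn/eqP -> : ~~ (dcoord j f != 0) by apply: contra h; apply: hf.
have /negPn/eqP -> : ~~ (dcoord j g != 0) by apply: contra h; apply: hg.
by rewrite scaler0 addr0.
Qed.
HB.instance Definition _ := GRing.isLinear.Build R dsum N *:%R dmap dmap_lin.

Lemma dmap_dinj (j : J) (x : X j) : dmap (dinj x) = F j x.
Proof.
rewrite (dmap_seq (s := [:: (j : cJ)])) ?big_seq1 ?dcoord_dinj // => k.
rewrite inE; apply: contraR => /eqP nk.
by rewrite dcoord_dinj_neq // => e; apply: nk.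
Qed.

Lemma dmap_unique (g : {linear dsum -> N}) :
  (forall j (x : X j), g (dinj x) = F j x) -> g =1 dmap.
Proof.
move=> hg f; rewrite {1}(@dsum_decomp f (dsupp f) (dsupp_uniq f)); last first.
  by move=> j; rewrite mem_dsupp.
by rewrite linear_sum /dmap; apply: eq_bigr => j _; rewrite hg.
Qed.
End Map.

Lemma dsum_is_dsum : is_dsum (fun j => (@dinj j : {linear _ -> _})).
Proof.
move=> N f; split; first by exists (dmap f : {linear _ -> _}) => i v /=; apply: dmap_dinj.
move=> g1 g2 h1 h2 v.
by rewrite (dmap_unique (F := f) (g := g1)) ?(dmap_unique (F := f) (g := g2)).
Qed.
End DirectSum.

Section DsumMaps.
Variables (R : pzRingType) (I : Type) (Bi : I -> lmodType R) (S : lmodType R)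
  (iota : forall i, {linear Bi i -> S}) (hS : is_dsum iota).

Lemma dsum_lift (N : lmodType R) (f : forall i, {linear Bi i -> N}) :
  {g : {linear S -> N} | forall i v, g (iota i v) = f i v}.
Proof. exact: cid (proj1 (hS f)). Qed.

Lemma dsum_ext (N : lmodType R) (g1 g2 : {linear S -> N}) :
  (forall i v, g1 (iota i v) = g2 (iota i v)) -> g1 =1 g2.
Proof.
by move=> e; apply: (proj2 (hS (fun i => g2 \o iota i))) => // i v /=; apply: e.
Qed.
End DsumMaps.

(* Quotients of a module by a submodule, given as a predicate closed under
   linear combinations.  Classes are represented by chosen representatives. *)
Record subm (R : pzRingType) (V : lmodType R) := Subm {
  sm :> V -> Prop;
  sm0 : sm 0;
  smP : forall a u v, sm u -> sm v -> sm (a *: u + v) }.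

Section Quotient.
Variables (R : pzRingType) (V : lmodType R) (U : subm V).

Lemma smD u v : U u -> U v -> U (u + v).
Proof. by move=> hu hv; rewrite -[u]scale1r; apply: smP. Qed.
Lemma smZ a u : U u -> U (a *: u).
Proof. by move=> hu; rewrite -[_ *: _]addr0; apply: smP => //; apply: sm0. Qed.
Lemma smN u : U u -> U (- u).
Proof. by move=> hu; rewrite -scaleN1r; apply: smZ. Qed.
Lemma smB u v : U u -> U v -> U (u - v).
Proof. by move=> hu hv; apply: smD => //; apply: smN. Qed.

Lemma ex_canon (v : V) : exists w, `[< U (w - v) >].
Proof. by exists v; apply/asboolP; rewrite subrr; apply: sm0. Qed.
Definition canon (v : V) : V := xchoose (ex_canon v).
Lemma canon_rel v : U (canon v - v).
Proof. exact: (asboolW (xchooseP (ex_canon v))). Qed.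
Lemma canon_eq v w : U (v - w) -> canon v = canon w.
Proof.
move=> h; apply: eq_xchoose => x; apply/asboolP/asboolP => hx.
  by have := smD hx h; rewrite addrA subrK.
by have := smB hx h; rewrite opprB addrA subrK.
Qed.
Lemma canon_id v : canon (canon v) = canon v.
Proof. exact/canon_eq/canon_rel. Qed.

Record quot := Quot { qval : V; qvalP : canon qval == qval }.
HB.instance Definition _ := [isSub for qval].
HB.instance Definition _ := [Choice of quot by <:].

Definition qpi (v : V) : quot := Quot (introT eqP (canon_id v)).
Lemma qpiK (q : quot) : qpi (qval q) = q.
Proof. by apply: val_inj => /=; apply/eqP; case: q. Qed.
Lemma qpi_eq v w : (qpi v = qpi w) <-> U (v - w).
Proof.
split => [h|h]; last by apply: val_inj => /=; apply: canon_eq.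
have e : canon v = canon w by move: (congr1 qval h).
have := smN (smB (canon_rel v) (canon_rel w)).
by rewrite e opprB opprB addrC addrA subrK.
Qed.
Lemma qval_rel v : U (qval (qpi v) - v).
Proof. exact: canon_rel. Qed.

Lemma qind (P : quot -> Prop) : (forall v, P (qpi v)) -> forall q, P q.
Proof. by move=> h q; rewrite -(qpiK q). Qed.

Definition qadd (q r : quot) := qpi (qval q + qval r).
Definition qopp (q : quot) := qpi (- qval q).
Definition qscale a (q : quot) := qpi (a *: qval q).

Lemma qaddE v w : qadd (qpi v) (qpi w) = qpi (v + w).
Proof. by apply/qpi_eq; have := smD (qval_rel v) (qval_rel w); rewrite opprD addrACA. Qed.
Lemma qoppE v : qopp (qpi v) = qpi (- v).
Proof. by apply/qpi_eq; have := smN (qval_rel v); rewrite opprB opprK addrC. Qed.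
Lemma qscaleE a v : qscale a (qpi v) = qpi (a *: v).
Proof. by apply/qpi_eq; have := smZ a (qval_rel v); rewrite scalerBr. Qed.

Lemma qaddA : associative qadd.
Proof. by elim/qind => u; elim/qind => v; elim/qind => w; rewrite !qaddE addrA. Qed.
Lemma qaddC : commutative qadd.
Proof. by elim/qind => u; elim/qind => v; rewrite !qaddE addrC. Qed.
Lemma qadd0 : left_id (qpi 0) qadd.
Proof. by elim/qind => u; rewrite qaddE add0r. Qed.
Lemma qaddN : left_inverse (qpi 0) qopp qadd.
Proof. by elim/qind => u; rewrite qoppE qaddE addNr. Qed.
HB.instance Definition _ := GRing.isZmodule.Build quot qaddA qaddC qadd0 qaddN.

Lemma qscaleA a b (q : quot) : qscale a (qscale b q) = qscale (a * b) q.
Proof. by elim/qind: q => u; rewrite !qscaleE scalerA. Qed.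
Lemma qscale1 : left_id 1 qscale.
Proof. by elim/qind => u; rewrite qscaleE scale1r. Qed.
Lemma qscaleDr : right_distributive qscale qadd.
Proof.
by move=> a; elim/qind => u; elim/qind => v; rewrite qaddE !qscaleE qaddE scalerDr.
Qed.
Lemma qscaleDl (q : quot) : {morph qscale^~ q: a b / a + b >-> qadd a b}.
Proof. by elim/qind: q => u a b; rewrite !qscaleE qaddE scalerDl. Qed.
HB.instance Definition _ := GRing.Zmodule_isLmodule.Build R quot
  qscaleA qscale1 qscaleDr qscaleDl.

Lemma qpi_lin : linear qpi.
Proof.
move=> a u v; have -> : a *: qpi u + qpi v = qadd (qscale a (qpi u)) (qpi v) by [].
by rewrite qscaleE qaddE.
Qed.
HB.instance Definition _ := GRing.isLinear.Build R V quot *:%R qpi qpi_lin.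

Lemma qpi0 v : (qpi v = 0) <-> U v.
Proof. by rewrite -(linear0 qpi) qpi_eq subr0. Qed.

(* A linear map vanishing on U factors through the quotient; the proof of
   vanishing is an argument of [qmap] so that its linearity is canonical. *)
Section QMap.
Variables (N : lmodType R) (h : {linear V -> N}) (hU : forall u, U u -> h u = 0).
Definition qmap (hU' : forall u, U u -> h u = 0) (q : quot) : N := h (qval q).
Lemma qmap_pi v : qmap hU (qpi v) = h v.
Proof. by apply/eqP; rewrite -subr_eq0 -linearB; apply/eqP/hU/qval_rel. Qed.
Lemma qmap_lin : linear (qmap hU).
Proof. by move=> a; elim/qind => u; elim/qind => v; rewrite -linearP !qmap_pi linearP. Qed.
HB.instance Definition _ := GRing.isLinear.Build R quot N *:%R (qmap hU) qmap_lin.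
End QMap.
End Quotient.

Section PPCalculus.
Variable R : pzRingType.

Definition lc (M : lmodType R) k n (A : 'M[R]_(k, n)) (x : 'I_n -> M) (r : 'I_k) : M :=
  \sum_(j < n) A r j *: x j.

Lemma ppsatE n (phi : ppf R n) (M : lmodType R) (x : 'I_n -> M) :
  ppsat phi x <-> exists y, forall r, lc (pp_A phi) x r + lc (pp_B phi) y r = 0.
Proof. by []. Qed.

(* Concatenation of tuples, matching block matrices [row_mx]. *)
Definition pcat (M : Type) a b (x : 'I_a -> M) (y : 'I_b -> M) : 'I_(a + b) -> M :=
  fun l => match split l with inl i => x i | inr i => y i end.

Lemma pcatL (M : Type) a b (x : 'I_a -> M) (y : 'I_b -> M) i : pcat x y (lshift b i) = x i.
Proof.
rewrite /pcat; case: splitP => j /= e; first by congr x; apply: val_inj.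
by have := ltn_ord i; rewrite e ltnNge leq_addr.
Qed.
Lemma pcatR (M : Type) a b (x : 'I_a -> M) (y : 'I_b -> M) i : pcat x y (rshift a i) = y i.
Proof.
rewrite /pcat; case: splitP => j /= e.
  by have := ltn_ord j; rewrite -e ltnNge leq_addr.
by congr y; apply: val_inj; move/eqP: e; rewrite eqn_add2l => /eqP.
Qed.
Lemma pcat_split (M : Type) a b (z : 'I_(a + b) -> M) :
  z = pcat (fun i => z (lshift b i)) (fun i => z (rshift a i)).
Proof.
apply: funext => l; rewrite -(splitK l); case: (split l) => c /=.
  by rewrite pcatL.
by rewrite pcatR.
Qed.

Lemma lc_row (M : lmodType R) k a b (A : 'M[R]_(k, a)) (B : 'M[R]_(k, b))
    (x : 'I_a -> M) (y : 'I_b -> M) r :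
  lc (row_mx A B) (pcat x y) r = lc A x r + lc B y r.
Proof.
rewrite /lc big_split_ord /=; congr (_ + _); apply: eq_bigr => i _.
  by rewrite row_mxEl pcatL.
by rewrite row_mxEr pcatR.
Qed.
Lemma lc_colU (M : lmodType R) k1 k2 n (A : 'M[R]_(k1, n)) (B : 'M[R]_(k2, n))
    (x : 'I_n -> M) r :
  lc (col_mx A B) x (lshift k2 r) = lc A x r.
Proof. by apply: eq_bigr => i _; rewrite col_mxEu. Qed.
Lemma lc_colD (M : lmodType R) k1 k2 n (A : 'M[R]_(k1, n)) (B : 'M[R]_(k2, n))
    (x : 'I_n -> M) r :
  lc (col_mx A B) x (rshift k1 r) = lc B x r.
Proof. by apply: eq_bigr => i _; rewrite col_mxEd. Qed.
Lemma lc0 (M : lmodType R) k n (x : 'I_n -> M) r : lc (0 : 'M_(k, n)) x r = 0.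
Proof. by apply: big1 => i _; rewrite mxE scale0r. Qed.
Lemma lc1 (M : lmodType R) n (x : 'I_n -> M) r : lc 1%:M x r = x r.
Proof.
rewrite /lc (bigD1 r) //= big1 => [|i /negbTE nir]; first by rewrite mxE eqxx scale1r addr0.
by rewrite mxE eq_sym nir scale0r.
Qed.
Lemma lcN (M : lmodType R) k n (A : 'M_(k, n)) (x : 'I_n -> M) r : lc (- A) x r = - lc A x r.
Proof. by rewrite /lc -sumrN; apply: eq_bigr => i _; rewrite mxE scaleNr. Qed.
Lemma lc_x0 (M : lmodType R) k n (A : 'M_(k, n)) r : lc A (fun _ => (0 : M)) r = 0.
Proof. by apply: big1 => i _; rewrite scaler0. Qed.
Lemma lcxD (M : lmodType R) k n (A : 'M_(k, n)) (x y : 'I_n -> M) r :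
  lc A (fun i => x i + y i) r = lc A x r + lc A y r.
Proof. by rewrite /lc -big_split; apply: eq_bigr => i _; rewrite scalerDr. Qed.
Lemma lcxB (M : lmodType R) k n (A : 'M_(k, n)) (x y : 'I_n -> M) r :
  lc A (fun i => x i - y i) r = lc A x r - lc A y r.
Proof.
rewrite /lc -sumrB; apply: eq_bigr => i _; exact: scalerBr.
Qed.
Lemma lc_lin (M N : lmodType R) (f : {linear M -> N}) k n (A : 'M_(k, n)) (x : 'I_n -> M) r :
  f (lc A x r) = lc A (fun i => f (x i)) r.
Proof. by rewrite /lc linear_sum; apply: eq_bigr => i _; rewrite linearZ. Qed.

Lemma ppsat_lin n (phi : ppf R n) (M N : lmodType R) (f : {linear M -> N}) (x : 'I_n -> M) :
  ppsat phi x -> ppsat phi (fun i => f (x i)).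
Proof.
move=> /ppsatE [y hy]; apply/ppsatE; exists (fun l => f (y l)) => r.
by rewrite -!lc_lin -linearD /= hy linear0.
Qed.

Lemma ppsatD n (phi : ppf R n) (M : lmodType R) (x y : 'I_n -> M) :
  ppsat phi x -> ppsat phi y -> ppsat phi (fun i => x i + y i).
Proof.
move=> /ppsatE [u hu] /ppsatE [v hv]; apply/ppsatE; exists (fun l => u l + v l) => r.
by rewrite !lcxD addrACA hu hv addr0.
Qed.

Lemma ppsat_ext n (phi : ppf R n) (M : lmodType R) (x y : 'I_n -> M) :
  (forall i, x i = y i) -> ppsat phi x -> ppsat phi y.
Proof. by move=> e; have -> : x = y by apply: funext. Qed.

Definition free_realization n (phi : ppf R n) (C : lmodType R) (c : 'I_n -> C) : Prop :=
  ppsat phi c /\ forall (N : lmodType R) (z : 'I_n -> N), ppsat phi z ->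
    exists f : {linear C -> N}, forall i, f (c i) = z i.

Lemma free_realization_le n (phi psi : ppf R n) (C : lmodType R) (c : 'I_n -> C) :
  free_realization phi c -> ppsat psi c -> pp_le phi psi.
Proof.
move=> [_ fr] hc N z hz; have [f hf] := fr N z hz.
by apply: ppsat_ext hf _; apply: ppsat_lin.
Qed.

(* The sum of two pp formulas: (x = x1 + x2, phi x1, psi x2) written as the
   single system  phi(x1, w1) /\ psi(x - x1, w2)  in the variables (x1,w1,w2). *)
Definition psum n (phi psi : ppf R n) : ppf R n :=
  @PPF R n (pp_k phi + pp_k psi) (n + (pp_m phi + pp_m psi))
    (col_mx 0 (pp_A psi))
    (col_mx (row_mx (pp_A phi) (row_mx (pp_B phi) 0))
            (row_mx (- pp_A psi) (row_mx 0 (pp_B psi)))).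

Lemma psumP n (phi psi : ppf R n) : pp_is_sum (psum phi psi) phi psi.
Proof.
move=> M x; split.
  move=> /ppsatE [y hy].
  pose x1 := fun i => y (lshift _ i).
  pose w1 := fun l => y (rshift n (lshift (pp_m psi) l)).
  pose w2 := fun l => y (rshift n (rshift (pp_m phi) l)).
  have ey : y = pcat x1 (pcat w1 w2).
    by rewrite [LHS]pcat_split [X in pcat _ X]pcat_split.
  exists x1, (fun i => x i - x1 i); split; first by move=> i; rewrite addrC subrK.
  split.
    apply/ppsatE; exists w1 => r; have := hy (lshift _ r).
    by rewrite lc_colU lc_colU ey !lc_row lc0 lc0 add0r addr0.
  apply/ppsatE; exists w2 => r; have := hy (rshift _ r).
  by rewrite lc_colD lc_colD ey !lc_row lc0 add0r lcN lcxB addrA.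
move=> [y1 [y2 [ex [/ppsatE [w1 h1] /ppsatE [w2 h2]]]]].
apply/ppsatE; exists (pcat y1 (pcat w1 w2)) => r; rewrite -(splitK r); case: (split r) => a /=.
  by rewrite lc_colU lc_colU !lc_row lc0 lc0 add0r addr0 h1.
rewrite lc_colD lc_colD !lc_row lc0 add0r lcN.
have -> : x = (fun i => y1 i + y2 i) by apply: funext.
by rewrite lcxD -addrA addrCA addNKr h2.
Qed.

Lemma psum_le n (phi psi chi : ppf R n) :
  pp_le phi chi -> pp_le psi chi -> pp_le (psum phi psi) chi.
Proof.
move=> h1 h2 M x /psumP [x1 [x2 [ex [s1 s2]]]].
by apply: ppsat_ext (fun i => esym (ex i)) _; apply: ppsatD; [apply: h1 | apply: h2].
Qed.
End PPCalculus.

Section PureEpi.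
Variable R : pzRingType.

(* [kerf phi] says that its k free variables are the values A x + B y of the
   system of phi at some (x, y). *)
Definition kerf n (phi : ppf R n) : ppf R (pp_k phi) :=
  @PPF R (pp_k phi) (pp_k phi) (n + pp_m phi) 1%:M (- row_mx (pp_A phi) (pp_B phi)).

(* Pure epimorphisms lift pp tuples: lift x and its witnesses arbitrarily,
   then correct by a solution in the kernel of the system's defect. *)
Lemma pure_lift (S M : lmodType R) (p : {linear S -> M}) n (phi : ppf R n) (x : 'I_n -> M) :
  pure_epi p -> ppsat phi x -> exists s, (forall i, p (s i) = x i) /\ ppsat phi s.
Proof.
move=> [surj pure] /ppsatE [y hy].
pose sec m := projT1 (cid (surj m)).
have psec m : p (sec m) = m by rewrite /sec; case: cid.
pose s := fun i => sec (x i); pose t := fun l => sec (y l).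
pose kk := fun r => lc (pp_A phi) s r + lc (pp_B phi) t r.
have kk_ker r : p (kk r) = 0.
  rewrite linearD !lc_lin.
  have -> : (fun i => p (s i)) = x by apply: funext => i; apply: psec.
  have -> : (fun i => p (t i)) = y by apply: funext => i; apply: psec.
  exact: hy.
have kk_sat : ppsat (kerf phi) kk.
  by apply/ppsatE; exists (pcat s t) => r; rewrite /= lc1 lcN lc_row subrr.
have [z [pz hz]] := pure _ (kerf phi) kk kk_ker kk_sat.
have {}hz r : lc 1%:M kk r + lc (- row_mx (pp_A phi) (pp_B phi)) z r = 0 := hz r.
pose u := fun i => z (lshift (pp_m phi) i); pose v := fun i => z (rshift n i).
have ez : z = pcat u v by apply: pcat_split.
exists (fun i => s i - u i); split.
  by move=> i; rewrite linearB /= psec pz subr0.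
apply/ppsatE; exists (fun l => t l - v l) => r.
have := hz r; rewrite lc1 lcN ez lc_row => /eqP; rewrite subr_eq0 => /eqP e.
by rewrite !lcxB addrACA -/(kk r) e -opprD subrr.
Qed.

Lemma lift_pure (S M : lmodType R) (p : {linear S -> M}) :
  (forall n (phi : ppf R n) (x : 'I_n -> M), ppsat phi x ->
     exists s, (forall i, p (s i) = x i) /\ ppsat phi s) -> pure_epi p.
Proof.
move=> hl; split.
  move=> m; have [|s [hs _]] := hl 1 (@PPF R 1 0 0 0 0) (fun _ => m).
    by apply/ppsatE; exists (fun _ => 0) => r; case: r.
  by exists (s ord0); apply: hs.
move=> n phi x hx /ppsatE [y hy].
pose rho := @PPF R (pp_m phi) (pp_k phi) 0 (pp_B phi) (0 : 'M[R]_(pp_k phi, 0)).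
have [|t [pt /ppsatE [w hw]]] := hl _ rho (fun l => p (y l)).
  apply/ppsatE; exists (fun _ => 0) => r; rewrite /= lc_x0 addr0 -lc_lin.
  have := congr1 p (hy r); rewrite linear0 linearD lc_lin.
  have -> : (fun i => p (x i)) = (fun _ => 0) by apply: funext => i; apply: hx.
  by rewrite lc_x0 add0r.
exists (fun l => y l - t l); split; first by move=> l; rewrite linearB /= pt subrr.
move=> r; have := hw r; rewrite /= [lc _ w r]big_ord0 addr0 => e.
have -> : \sum_(j < n) pp_A phi r j *: x j + \sum_(l < pp_m phi) pp_B phi r l *: (y l - t l)
   = lc (pp_A phi) x r + lc (pp_B phi) (fun l => y l - t l) r by [].
by rewrite lcxB e subr0 hy.
Qed.

Lemma id_pure (M : lmodType R) : pure_epi (idfun : {linear M -> M}).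
Proof. by apply: lift_pure => n phi x hx; exists x. Qed.

(* Lift summand by summand, then glue by the universal property. *)
Lemma dsum_pure_projective (I : Type) (Bi : I -> lmodType R) (S : lmodType R)
    (iota : forall i, {linear Bi i -> S}) :
  (forall i, pure_projective (Bi i)) -> is_dsum iota -> pure_projective S.
Proof.
move=> hB hS S' M p pp f.
have hg i : exists g : {linear Bi i -> S'}, (p \o g) =1 (f \o iota i) by apply: hB.
pose g i := projT1 (cid (hg i)).
have pg i : (p \o g i) =1 (f \o iota i) by rewrite /g; case: cid.
have [[G hG] _] := hS S' g; exists G.
have [_ uniq] := hS M (fun i => f \o iota i).
apply: (uniq (p \o G) f) => // i v /=.
by have := hG i v; rewrite /= => ->; apply: pg.
Qed.
End PureEpi.

Section FreeModule.
Variables (R : pzRingType) (X : Type).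
Local Notation cX := {classic X}.

Definition freemod := dsum (fun _ : X => R^o).
Definition coord (x : X) (v : freemod) : R := dcoord x v.
Definition gen (x : X) : freemod := @dinj R X (fun _ => R^o) x 1.

Definition scalev (M : lmodType R) (m : M) (a : R^o) : M := (a : R) *: m.
Lemma scalev_lin (M : lmodType R) (m : M) : linear (scalev m).
Proof. by move=> c a b; rewrite /scalev scalerDl scalerA. Qed.
HB.instance Definition _ (M : lmodType R) (m : M) :=
  GRing.isLinear.Build R R^o M *:%R (scalev m) (scalev_lin m).

Definition free_map (N : lmodType R) (y : X -> N) : {linear freemod -> N} :=
  dmap (fun x => scalev (y x) : {linear R^o -> N}).

Lemma free_map_gen (N : lmodType R) (y : X -> N) x : free_map y (gen x) = y x.
Proof. by rewrite /free_map /= dmap_dinj /= /scalev scale1r. Qed.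

Lemma free_mapE (N : lmodType R) (y : X -> N) v :
  free_map y v = \sum_(x <- dsupp v) coord x v *: y x.
Proof. by []. Qed.

Lemma free_expand (N : lmodType R) (h : {linear freemod -> N}) (s : seq cX) v :
  uniq s -> (forall x : cX, coord x v != 0 -> x \in s) ->
  h v = \sum_(x <- s) coord x v *: h (gen x).
Proof.
move=> us hs; rewrite {1}(dsum_decomp us hs) linear_sum; apply: eq_bigr => x _.
have -> : dinj (dcoord x v) = coord x v *: gen x.
  by rewrite /gen -linearZ /= /GRing.scale /= mulr1.
by rewrite linearZ.
Qed.
End FreeModule.
Arguments gen {R X} x.

(* The module presented by generators X and relations rel k (k in K): the
   quotient of the free module by the submodule of elements killed by every
   linear map killing all relations. *)
Section Presentation.
Variables (R : pzRingType) (X K : Type) (rel : K -> freemod R X).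
Local Notation cX := {classic X}.

Definition in_relsub (v : freemod R X) : Prop :=
  forall (N : lmodType R) (h : {linear freemod R X -> N}), (forall k, h (rel k) = 0) -> h v = 0.
Lemma in_relsub0 : in_relsub 0.
Proof. by move=> N h _; rewrite linear0. Qed.
Lemma in_relsubP a u v : in_relsub u -> in_relsub v -> in_relsub (a *: u + v).
Proof. by move=> hu hv N h hh; rewrite linearP /= hu // hv // scaler0 addr0. Qed.
Definition relsub : subm (freemod R X) := Subm in_relsub0 in_relsubP.

Definition pres := quot relsub.

(* The pp formula presf G W v describes the tuple v through finitely many
   generators G and relations W: its witnesses y are the images of G, subject
   to the relations in W, and v_i is expressed as a combination of y. *)
Section FinitePart.
Variables (G : seq cX) (W : seq (freemod R X)) (n : nat) (v : 'I_n -> freemod R X).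
Local Notation gG p := (tnth (in_tuple G) p).

Definition presf : ppf R n :=
  @PPF R n (size W + n) (size G) (col_mx 0 1%:M)
    (col_mx (\matrix_(w < size W, p < size G) coord (gG p) (nth 0 W w))
            (- \matrix_(i < n, p < size G) coord (gG p) (v i))).

Hypotheses (uG : uniq G)
  (suppW : forall w, w \in W -> forall x : cX, coord x w != 0 -> x \in G)
  (suppv : forall i (x : cX), coord x (v i) != 0 -> x \in G).

Lemma expand_on_G (N : lmodType R) (h : {linear freemod R X -> N}) u :
  (forall x : cX, coord x u != 0 -> x \in G) ->
  h u = \sum_(p < size G) coord (gG p) u *: h (gen (gG p)).
Proof. by move=> hu; rewrite (free_expand h uG hu) big_tnth. Qed.

Lemma presf_sat (N : lmodType R) (h : {linear freemod R X -> N}) :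
  (forall w, w \in W -> h w = 0) -> ppsat presf (fun i => h (v i)).
Proof.
move=> hW; apply/ppsatE; exists (fun p => h (gen (gG p))) => r.
rewrite -(splitK r); case: (split r) => a /=.
  rewrite lc_colU lc_colU lc0 add0r.
  have aW : nth 0 W a \in W by apply: mem_nth.
  rewrite -(hW _ aW) (expand_on_G _ (suppW aW)).
  by apply: eq_bigr => p _; rewrite mxE.
rewrite lc_colD lc_colD lc1 lcN (expand_on_G _ (@suppv a)); apply/eqP; rewrite subr_eq0.
by apply/eqP/eq_bigr => p _; rewrite mxE.
Qed.

(* If W consists of relations and every relation either lies in W or avoids
   G, then the image of v in the presented module freely realizes presf:
   witnesses for presf in N define a map on generators killing all
   relations. *)
Lemma presf_free_realization :
  (forall w, w \in W -> relsub w) ->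
  (forall k, rel k \in W \/ forall x : cX, x \in G -> coord x (rel k) = 0) ->
  free_realization presf (fun i => qpi relsub (v i)).
Proof.
move=> Wrel closed; split; first by apply: presf_sat => w /Wrel /qpi0.
move=> N z /ppsatE [y hy].
pose yG (x : cX) := \sum_(p < size G | gG p == x) y p.
have yG_gen p : yG (gG p) = y p.
  have inj : injective (tnth (in_tuple G)) by apply/tuple_uniqP.
  rewrite /yG (bigD1 p) //= big1 ?addr0 // => p' /andP [/eqP e ne].
  by move: ne; rewrite (inj _ _ e) eqxx.
have yG_out (x : cX) : x \notin G -> yG x = 0.
  by move=> xG; apply: big1 => p /eqP e; move: xG; rewrite -e mem_tnth.
pose H := free_map yG.
have HG u : (forall x : cX, coord x u != 0 -> x \in G) ->
    H u = \sum_(p < size G) coord (gG p) u *: y p.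
  by move=> hu; rewrite (expand_on_G H hu); apply: eq_bigr => p _; rewrite free_map_gen yG_gen.
have H_W w : w \in W -> H w = 0.
  move=> wW; have iw : (index w W < size W)%N by rewrite index_mem.
  have := hy (lshift n (Ordinal iw)).
  rewrite /= lc_colU lc_colU lc0 add0r => <-.
  rewrite -{1}(nth_index 0 wW) HG; last by apply: suppW; rewrite mem_nth ?index_mem.
  by apply: eq_bigr => p _; rewrite mxE.
have H_rel k : H (rel k) = 0.
  have [/H_W //|avoid] := closed k.
  rewrite /H free_mapE big1 // => x _.
  have [xG|xG] := boolP (x \in G); first by rewrite avoid // scale0r.
  by rewrite yG_out // scaler0.
have HU u : relsub u -> H u = 0 by move=> hu; apply: hu.
exists (qmap HU : {linear _ -> _}) => i.
change (qmap HU (qpi relsub (v i)) = z i); rewrite qmap_pi HG; last exact: suppv.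
have := hy (rshift (size W) i); rewrite /= lc_colD lc_colD lc1 lcN => /eqP.
by rewrite subr_eq0 => /eqP ->; apply: eq_bigr => p _; rewrite mxE.
Qed.
End FinitePart.
End Presentation.

(* Block presentations: the direct sum over j in J of the finitely presented
   modules R^(a j) / (rows of M j).  Every tuple in such a module has a free
   realization: finitely many blocks carry its support, and the generators
   and relations of those blocks give a suitable pp formula [presf]. *)
Section BlockPresentation.
Variables (R : pzRingType) (J : Type) (a k : J -> nat) (M : forall j, 'M[R]_(k j, a j)).
Local Notation cJ := {classic J}.

Definition bgen := {j : J & 'I_(a j)}.
Local Notation cX := {classic bgen}.

Definition brel (jr : {j : J & 'I_(k j)}) : freemod R bgen :=
  lc (M (tag jr)) (fun i => gen (Tagged (fun j => 'I_(a j)) i)) (tagged jr).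

Lemma coord_brel (x : bgen) jr : tag x <> tag jr -> coord x (brel jr) = 0.
Proof.
move=> nx; rewrite /coord /brel (lc_lin (dcoord x : {linear _ -> _})).
rewrite (_ : (fun i => _) = fun _ => 0) ?lc_x0 //; apply: funext => i.
by apply: dcoord_dinj_neq => e; apply: nx; rewrite -e.
Qed.

(* The pp formula: all generators and relations of the blocks meeting the
   support of v. *)
Lemma block_free_realization n (v : 'I_n -> freemod R bgen) :
  exists psi : ppf R n, free_realization psi (fun i => qpi (relsub brel) (v i)).
Proof.
pose JG : seq cJ :=
  undup [seq (tag x : cJ) | x : cX <- flatten [seq dsupp (v i) | i <- enum 'I_n]].
pose G : seq cX := undup (flatten
  [seq [seq (Tagged (fun j => 'I_(a j)) i : cX) | i <- enum 'I_(a j)] | j : cJ <- JG]).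
pose W := flatten
  [seq [seq brel (Tagged (fun j => 'I_(k j)) r) | r <- enum 'I_(k j)] | j : cJ <- JG].
have memG (x : cX) : (x \in G) = ((tag x : cJ) \in JG).
  rewrite mem_undup; apply/flatten_mapP/idP => [[j jJ /mapP [i _ ->]] //|xJ].
  by exists (tag x) => //; case: x xJ => j i _; apply: map_f; rewrite mem_enum.
have supp_v i (x : cX) : coord x (v i) != 0 -> (tag x : cJ) \in JG.
  rewrite mem_undup -mem_dsupp => xs; apply: map_f; apply/flatten_mapP.
  by exists i; rewrite ?mem_enum.
have memW w : w \in W -> exists2 jr, (tag jr : cJ) \in JG & w = brel jr.
  by move=> /flatten_mapP [j jJ /mapP [r _ ->]]; exists (Tagged (fun j => 'I_(k j)) r).
have supp_brel jr (x : cX) : coord x (brel jr) != 0 -> tag x = tag jr.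
  by have [//|ne] := pselect (tag x = tag jr); rewrite coord_brel // eqxx.
exists (presf G W v); apply: presf_free_realization.
- exact: undup_uniq.
- by move=> w /memW [jr jrJ ->] x /supp_brel e; rewrite memG e.
- by move=> i x /supp_v; rewrite memG.
- by move=> w /memW [jr _ ->] N h; apply.
move=> jr; have [jrJ|jrJ] := boolP ((tag jr : cJ) \in JG).
  left; apply/flatten_mapP; exists (tag jr) => //.
  by case: jr jrJ => j r _; apply: map_f; rewrite mem_enum.
right => x; rewrite memG => xJ; apply: coord_brel => e.
by move: jrJ; rewrite -e xJ.
Qed.
End BlockPresentation.

Lemma free_realization_retract (R : pzRingType) (T D : lmodType R)
    (q : {linear T -> D}) (g : {linear D -> T}) n (psi : ppf R n) (d : 'I_n -> D) :
  (q \o g) =1 id -> free_realization psi (fun i => g (d i)) -> free_realization psi d.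
Proof.
move=> qg [sat fr]; split; first by apply: ppsat_ext (fun i => qg (d i)) (ppsat_lin q sat).
move=> N z /fr [f hf]; exists (f \o g : {linear _ -> _}); exact: hf.
Qed.

(* Every pure-projective module D is a retract of a block presentation: the
   one with a block for every pp tuple of D, presented by its pp formula.  The
   canonical map onto D is a pure epimorphism since every pp tuple lifts to
   its own block.  Hence every tuple of D has a free realization, i.e. the
   pp types in D are finitely generated. *)
Section PureProjective.
Local Set Strict Implicit.
Variables (R : pzRingType) (D : lmodType R).

Definition pptuple := {n : nat & {e : 'I_n -> D & {chi : ppf R n | ppsat chi e}}}.
Definition pt_n (j : pptuple) := projT1 j.
Definition pt_e (j : pptuple) : 'I_(pt_n j) -> D := projT1 (projT2 j).
Definition pt_chi (j : pptuple) : ppf R (pt_n j) := proj1_sig (projT2 (projT2 j)).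
Lemma pt_sat (j : pptuple) : ppsat (pt_chi j) (pt_e j).
Proof. exact: (proj2_sig (projT2 (projT2 j))). Qed.
Definition pt_w (j : pptuple) : 'I_(pp_m (pt_chi j)) -> D := projT1 (cid (pt_sat j)).

Definition pt_val (j : pptuple) := pcat (pt_e j) (pt_w j).
Definition pt_mx (j : pptuple) := row_mx (pp_A (pt_chi j)) (pp_B (pt_chi j)).

Lemma pt_valP j r : lc (pt_mx j) (pt_val j) r = 0.
Proof. by rewrite lc_row /pt_w; case: cid => w hw; apply: hw. Qed.

Local Notation rels := (brel pt_mx).

Definition pt_map0 : {linear freemod R (bgen (fun j => pt_n j + pp_m (pt_chi j))) -> D} :=
  free_map (fun x => pt_val (tag x) (tagged x)).

Lemma pt_map0_rel jr : pt_map0 (rels jr) = 0.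
Proof.
rewrite /brel lc_lin -(pt_valP (tag jr) (tagged jr)); apply: eq_bigr => i _.
by rewrite free_map_gen.
Qed.

Lemma pt_map0_sub u : relsub rels u -> pt_map0 u = 0.
Proof. by move=> hu; apply: hu; apply: pt_map0_rel. Qed.

Definition pt_map : {linear pres rels -> D} := qmap pt_map0_sub.

Lemma pt_map_pi u : pt_map (qpi (relsub rels) u) = pt_map0 u.
Proof. exact: qmap_pi. Qed.

(* A pp tuple (x, phi) of D lifts to the generators of its own block. *)
Lemma pt_map_pure : pure_epi pt_map.
Proof.
apply: lift_pure => n phi x hx.
pose j : pptuple := existT _ n (existT _ x (exist _ phi hx)).
pose c (l : 'I_(pt_n j + pp_m (pt_chi j))) :=
  qpi (relsub rels) (gen (Tagged (fun j => 'I_(pt_n j + pp_m (pt_chi j))) l)).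
exists (fun i => c (lshift (pp_m phi) i)); split.
  by move=> i; rewrite /c pt_map_pi free_map_gen /= /pt_val pcatL.
apply/ppsatE; exists (fun l => c (rshift n l)) => r.
rewrite /c -!(lc_lin (qpi (relsub rels) : {linear _ -> _})) -linearD; apply/qpi0.
have : relsub rels (rels (Tagged (fun j => 'I_(pp_k (pt_chi j))) (r : 'I_(pp_k (pt_chi j))))).
  by move=> N h; apply.
by rewrite /brel /= [X in lc _ X](pcat_split) lc_row.
Qed.

(* D is a retract of the block presentation, whose tuples have free
   realizations. *)
Theorem pure_projective_free_realization n (d : 'I_n -> D) :
  pure_projective D -> exists psi : ppf R n, free_realization psi d.
Proof.
move=> hD; have [g hg] := hD _ _ pt_map pt_map_pure idfun.
have [psi fr] := block_free_realization pt_mx (fun i => qval (g (d i))).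
have gd : (fun i => qpi (relsub rels) (qval (g (d i)))) = (fun i => g (d i)).
  by apply: funext => i; rewrite qpiK.
by exists psi; apply: free_realization_retract hg _; rewrite -gd.
Qed.
End PureProjective.

Lemma free_realization_psum (R : pzRingType) n (psi1 psi2 : ppf R n)
    (S1 S2 S : lmodType R) (e1 : {linear S1 -> S}) (e2 : {linear S2 -> S})
    (c1 : 'I_n -> S1) (c2 : 'I_n -> S2) :
  (forall (N : lmodType R) (f1 : {linear S1 -> N}) (f2 : {linear S2 -> N}),
     exists G : {linear S -> N}, (G \o e1 =1 f1) /\ (G \o e2 =1 f2)) ->
  free_realization psi1 c1 -> free_realization psi2 c2 ->
  free_realization (psum psi1 psi2) (fun i => e1 (c1 i) + e2 (c2 i)).
Proof.
move=> copr [sat1 fr1] [sat2 fr2]; split.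
  apply/psumP; exists (fun i => e1 (c1 i)), (fun i => e2 (c2 i)).
  by split=> //; split; apply: ppsat_lin.
move=> N z /psumP [z1 [z2 [ez [/fr1 [f1 hf1] /fr2 [f2 hf2]]]]].
have [G [G1 G2]] := copr N f1 f2.
exists G => i; rewrite linearD -[G (e1 _)]/((G \o e1) _) -[G (e2 _)]/((G \o e2) _).
by rewrite G1 G2 hf1 hf2 ez.
Qed.

Section Realizations.
Local Set Strict Implicit.
Variables (R : pzRingType) (B : modclass R).

Record realization n (psi : ppf R n) := Realization {
  rz_I : Type;
  rz_B : rz_I -> lmodType R;
  rz_S : lmodType R;
  rz_iota : forall i, {linear rz_B i -> rz_S};
  rz_inB : forall i, B (rz_B i);
  rz_dsum : is_dsum rz_iota;
  rz_c : 'I_n -> rz_S;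
  rz_free : free_realization psi rz_c }.

Definition realizable n (psi : ppf R n) : Prop := inhabited (realization psi).

Definition some_realization n (psi : ppf R n) (h : realizable psi) : realization psi :=
  sval (cid (let: inhabits g := h in ex_intro (fun _ => True) g I)).

Lemma realization_PGen n (psi : ppf R n) (g : realization psi) : PGen B (rz_S g).
Proof.
exists (rz_I g), (rz_B g), (rz_S g), (rz_iota g); split; first exact: rz_inB.
by split; [exact: rz_dsum | exists idfun; apply: id_pure].
Qed.

(* Realizable formulas are closed under sums: realize the sum in the direct
   sum of the two families of summands. *)
Section Sum.
Variables (n : nat) (psi1 psi2 : ppf R n) (g1 : realization psi1) (g2 : realization psi2).

Definition sum_I := (rz_I g1 + rz_I g2)%type.
Definition sum_B (i : sum_I) : lmodType R :=
  match i with inl a => rz_B g1 a | inr b => rz_B g2 b end.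
Definition sum_S : lmodType R := dsum sum_B.

Definition sum_e1 : {linear rz_S g1 -> sum_S} :=
  sval (dsum_lift (rz_dsum g1) (fun a => @dinj R sum_I sum_B (inl a) : {linear _ -> _})).
Definition sum_e2 : {linear rz_S g2 -> sum_S} :=
  sval (dsum_lift (rz_dsum g2) (fun b => @dinj R sum_I sum_B (inr b) : {linear _ -> _})).

Lemma sum_copr (N : lmodType R) (f1 : {linear rz_S g1 -> N}) (f2 : {linear rz_S g2 -> N}) :
  exists G : {linear sum_S -> N}, (G \o sum_e1 =1 f1) /\ (G \o sum_e2 =1 f2).
Proof.
pose G : {linear sum_S -> N} := dmap (fun i : sum_I =>
  match i as i0 return {linear sum_B i0 -> N} with
  | inl a => (f1 \o rz_iota g1 a : {linear _ -> _})
  | inr b => (f2 \o rz_iota g2 b : {linear _ -> _}) end).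
exists G; split.
  apply: (dsum_ext (rz_dsum g1) (g1 := G \o sum_e1 : {linear _ -> _})) => a v /=.
  by rewrite /sum_e1; case: dsum_lift => e /= ->; rewrite dmap_dinj.
apply: (dsum_ext (rz_dsum g2) (g1 := G \o sum_e2 : {linear _ -> _})) => b v /=.
by rewrite /sum_e2; case: dsum_lift => e /= ->; rewrite dmap_dinj.
Qed.

Lemma realization_psum : realization (psum psi1 psi2).
Proof.
apply: (@Realization _ _ sum_I sum_B sum_S (fun i => @dinj R sum_I sum_B i : {linear _ -> _})
  _ (@dsum_is_dsum R sum_I sum_B) _
  (free_realization_psum sum_copr (rz_free g1) (rz_free g2))).
by case=> i; apply: rz_inB.
Qed.
End Sum.

Definition ax_index n (phi : ppf R n) := {psi : ppf R n | pp_le psi phi /\ realizable psi}.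

Lemma ax_closed n (phi : ppf R n) (i j : ax_index phi) :
  exists k : ax_index phi, pp_is_sum (sval k) (sval i) (sval j).
Proof.
case: i j => [p1 [l1 [g1]]] [p2 [l2 [g2]]].
have real := inhabits (realization_psum g1 g2).
by exists (exist _ (psum p1 p2) (conj (psum_le l1 l2) real)); exact: psumP.
Qed.

Definition ax n (phi : ppf R n) : Fconcl R n :=
  @FConcl R n (ax_index phi) sval (@ax_closed n phi).

Hypothesis B_pproj : forall P, B P -> pure_projective P.

(* A tuple of such a
   module lifts along the pure epimorphism to a pp tuple of a direct sum of
   modules of B, which is pure-projective and so has a free realization. *)
Lemma PGen_Fsat (M : lmodType R) :
  PGen B M -> forall n (phi : ppf R n), Fsat phi (ax phi) M.
Proof.
move=> [I [Bi [S [iota [hB [hds [p pp]]]]]]] n phi x hx.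
have [s [ps hs]] := pure_lift pp hx.
have S_pproj : pure_projective S := dsum_pure_projective (fun i => B_pproj (hB i)) hds.
have [psi fr] := pure_projective_free_realization s S_pproj.
pose g := Realization hB hds fr.
exists (exist _ psi (conj (free_realization_le fr hs) (inhabits g))) => /=.
by apply: ppsat_ext ps _; apply: ppsat_lin; exact: fr.1.
Qed.

(* Completeness: a module satisfying the axioms is a pure-epimorphic image of
   the direct sum of all the realizations chosen for its pp tuples. *)
Section Completeness.
Variables (M : lmodType R) (hM : forall n (phi : ppf R n), Fsat phi (ax phi) M).

Definition cp_psi (j : pptuple M) : ax_index (pt_chi j) :=
  sval (cid (hM (pt_sat j))).
Lemma cp_psiP j : ppsat (sval (cp_psi j)) (pt_e j).
Proof. by rewrite /cp_psi; case: cid. Qed.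
Definition cp_rz (j : pptuple M) : realization (sval (cp_psi j)) :=
  some_realization (svalP (cp_psi j)).2.
Definition cp_f (j : pptuple M) : {linear rz_S (cp_rz j) -> M} :=
  sval (cid ((rz_free (cp_rz j)).2 _ _ (cp_psiP j))).
Lemma cp_fP j k : cp_f j (rz_c (cp_rz j) k) = pt_e j k.
Proof. by rewrite /cp_f; case: cid. Qed.

Definition cp_I := {j : pptuple M & rz_I (cp_rz j)}.
Definition cp_B (k : cp_I) : lmodType R := rz_B (cp_rz (tag k)) (tagged k).
Definition cp_S : lmodType R := dsum cp_B.
Definition cp_map : {linear cp_S -> M} :=
  dmap (fun k : cp_I =>
    (cp_f (tag k) \o rz_iota (cp_rz (tag k)) (tagged k) : {linear _ -> _})).

(* A pp tuple (x, phi) of M lifts to the image of the realizing tuple of its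
   own summand, which satisfies psi <= phi. *)

Lemma Fsat_PGen : PGen B M.
Proof.
exists cp_I, cp_B, cp_S, (fun k => (@dinj R cp_I cp_B k : {linear _ -> _})).
split; first by move=> k; exact: rz_inB.
split; first exact: dsum_is_dsum.
exists cp_map; apply: lift_pure => n phi x hx.
pose j : pptuple M := existT _ n (existT _ x (exist _ phi hx)).
have [h hh] := dsum_lift (rz_dsum (cp_rz j))
  (fun i => (@dinj R cp_I cp_B (existT _ j i) : {linear _ -> _})).
have cp_map_h : (cp_map \o h : {linear _ -> _}) =1 cp_f j.
  apply: (dsum_ext (rz_dsum (cp_rz j))) => i v /=.
  by rewrite hh /cp_map dmap_dinj.
exists (fun k => h (rz_c (cp_rz j) k)); split.
  by move=> k; rewrite -[cp_map _]/((cp_map \o h) _) cp_map_h cp_fP.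
apply: ppsat_lin; apply: (svalP (cp_psi j)).1; exact: (rz_free _).1.
Qed.
End Completeness.

(* The compatibility condition of special F-classes: if phi <=_F psi for a
   class F containing PGen B, every realizable psi' <= phi is itself among
   the conclusions for psi, since its realization lives in F. *)
Lemma ax_special (F : modclass R) : (forall M, PGen B M -> F M) ->
  forall n (phi psi : ppf R n), pp_leF F phi psi ->
  forall i : fc_I (ax phi), exists j : fc_I (ax psi), pp_le (fc_fam i) (fc_fam j).
Proof.
move=> BF n phi psi hle [psi' [le [g]]] /=.
have le' : pp_le psi' psi.
  apply: (free_realization_le (rz_free g)); apply: hle; first exact/BF/realization_PGen.
  by apply: le; exact: (rz_free g).1.
by exists (exist _ psi' (conj le' (inhabits g))).
Qed.
End Realizations.

Theorem lemma3p10 (R : pzRingType) (F : modclass R) :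
  purely_resolving F -> special_Fclass F.
Proof.
move=> [B [B_pproj [_ FB]]].
exists (ax B); split; first by move=> n phi i; exact: (svalP i).1.
split; last by apply: ax_special => M /FB.
by move=> M; rewrite FB; split; [exact: PGen_Fsat | exact: Fsat_PGen].
Qed.
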